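(* Let $\Phi\subseteq\mathbb{R}$ be a feasible set, let $\omega$ be a random element (a random sample path) on a probability space, and let $J:\Phi\times\Omega\to\mathbb{R}$ be a performance function. Suppose that for every $\omega$ the function $u\mapsto J(u,\omega)$ has a minimizer $u^\omega=\arg\min_{u\in\Phi}J(u,\omega)$ (the $\omega$-solution, a real random variable) and is scalar unimodal in $u$, i.e. $J(u',\omega)\le J(u'',\omega)$ whenever $u''<u'<u^\omega$, and $J(u',\omega)\le J(u'',\omega)$ whenever $u^\omega<u'<u''$ ($u',u''\in\Phi$). Let $u^m\in\Phi$ be an $\omega$-median, i.e. $\Pr[u^\omega\le u^m]\ge 0.5$ and $\Pr[u^\omega\ge u^m]\ge 0.5$. Then $u^m$ is a champion solution, i.e. $\Pr[J(u^m,\omega)\le J(u,\omega)]\ge 0.5$ for every $u\in\Phi$.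
   Context: A champion solution of the stochastic problem $\min_{u\in\Phi}J(u,\omega)$ is a $u^c\in\Phi$ with $\Pr[J(u^c,\omega)\le J(u,\omega)]\ge 0.5$ for all $u\in\Phi$. The $\omega$-solution $u^\omega$ is the optimal solution of the deterministic problem $\min_{u\in\Phi}J(u,\omega)$ for a fixed sample path $\omega$; the $\omega$-median is a median of the distribution of $u^\omega$. All events considered are assumed measurable. *)

From mathcomp Require Import all_boot all_order all_algebra.
From mathcomp Require Import all_classical all_reals all_analysis.
Set Implicit Arguments. Unset Strict Implicit. Unset Printing Implicit Defensive.
Import Order.TTheory GRing.Theory Num.Theory.
Local Open Scope classical_set_scope.
Local Open Scope ring_scope.

Definition omega_solution {R : realType} {T : Type}
  (Phi : set R) (J : R -> T -> R) (uw : T -> R) : Prop :=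
  forall w, Phi (uw w) /\ (forall u, Phi u -> J (uw w) w <= J u w).

Definition scalar_unimodal {R : realType} {T : Type}
  (Phi : set R) (J : R -> T -> R) (uw : T -> R) : Prop :=
  forall w u' u'', Phi u' -> Phi u'' ->
    ((u'' < u' /\ u' < uw w) -> J u' w <= J u'' w) /\
    ((uw w < u' /\ u' < u'') -> J u' w <= J u'' w).

Definition omega_median {d : measure_display} {T : measurableType d}
  {R : realType} (P : probability T R) (uw : T -> R) (um : R) : Prop :=
  (P [set w | (uw w <= um)%R] >= (2^-1)%:E)%E /\
  (P [set w | (uw w >= um)%R] >= (2^-1)%:E)%E.

Definition champion {d : measure_display} {T : measurableType d}
  {R : realType} (P : probability T R) (Phi : set R) (J : R -> T -> R)
  (uc : R) : Prop :=
  Phi uc /\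
  forall u, Phi u -> (P [set w | (J uc w <= J u w)%R] >= (2^-1)%:E)%E.

From mathcomp Require Import all_boot all_order all_algebra.
From mathcomp Require Import all_classical all_reals all_analysis.
Import Order.TTheory GRing.Theory Num.Theory.
Local Open Scope classical_set_scope.
Local Open Scope ring_scope.

(* If u < um, then on every path with um <= uw w the point um lies between u
   and the minimizer, so unimodality gives J um <= J u there; hence the event
   [J um <= J u] contains [um <= uw], of probability at least 1/2 by the
   median property.  The case um < u is symmetric. *)

Lemma measurable_sublevel d (T : measurableType d) (R : realType)
  (f : T -> R) (a : R) : measurable_fun setT f -> measurable [set x | f x <= a].
Proof.
by move=> mf; rewrite -preimage_itvNyc -[_ @^-1` _]setTI; exact: mf.
Qed.

Lemma measurable_superlevel d (T : measurableType d) (R : realType)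
  (f : T -> R) (a : R) : measurable_fun setT f -> measurable [set x | a <= f x].
Proof.
by move=> mf; rewrite -preimage_itvcy -[_ @^-1` _]setTI; exact: mf.
Qed.

Lemma probability_ge_half_le d (T : measurableType d) (R : realType)
  (P : probability T R) (A B : set T) :
  measurable A -> measurable B -> A `<=` B ->
  (2^-1%:E <= P A -> 2^-1%:E <= P B)%E.
Proof.
by move=> mA mB AB /le_trans; apply; apply: le_measure; rewrite ?inE.
Qed.

Section UnimodalComparison.
Variables (R : realType) (T : Type) (Phi : set R) (J : R -> T -> R) (uw : T -> R).
Hypotheses (Hsol : omega_solution Phi J uw) (Huni : scalar_unimodal Phi J uw).

Lemma unimodal_le_left u v w : Phi u -> Phi v -> u < v -> v <= uw w ->
  J v w <= J u w.
Proof.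
move=> Pu Pv uv; rewrite le_eqVlt => /predU1P [->|vw].
  exact: (Hsol w).2.
exact: (Huni w v u Pv Pu).1 (conj uv vw).
Qed.

Lemma unimodal_le_right u v w : Phi u -> Phi v -> v < u -> uw w <= v ->
  J v w <= J u w.
Proof.
move=> Pu Pv vu; rewrite le_eqVlt => /predU1P [<-|wv].
  exact: (Hsol w).2.
exact: (Huni w v u Pv Pu).2 (conj wv vu).
Qed.

End UnimodalComparison.

Theorem theorem1 (d : measure_display) (T : measurableType d) (R : realType)
  (P : probability T R) (Phi : set R) (J : R -> T -> R) (uw : T -> R)
  (um : R)
  (uw_meas : measurable_fun setT uw)
  (J_events_meas : forall u v, Phi u -> Phi v ->
     measurable [set w | J u w <= J v w])
  (Hsol : omega_solution Phi J uw)
  (Huni : scalar_unimodal Phi J uw)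
  (Hum : Phi um)
  (Hmed : omega_median P uw um) :
  champion P Phi J um.
Proof.
split=> // u Pu; have mJ := J_events_meas _ _ Hum Pu.
have [ltu|gtu|equ] := ltgtP u um.
- apply: probability_ge_half_le Hmed.2 => //.
    exact: measurable_superlevel uw_meas.
  by move=> w; exact: unimodal_le_left.
- apply: probability_ge_half_le Hmed.1 => //.
    exact: measurable_sublevel uw_meas.
  by move=> w; exact: unimodal_le_right.
- rewrite equ in mJ *; apply: probability_ge_half_le Hmed.1 => //.
    exact: measurable_sublevel uw_meas.
  by move=> w _ /=.
Qed.
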